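(* In the setting below, suppose $n\ge 3$ and let $p,q\in X$ with $S_p\cup S_q=E$ and $|S_p\cap S_q|=n-1$. Let $\{e_a\}=S_p\setminus S_q$, $\{e_b\}=S_q\setminus S_p$, and write $p=\sum_{e_i\in S_p}\lambda_ie_i$, $q=\sum_{e_i\in S_q}\theta_ie_i$ (normalized by the convention). Then $\lambda_a>1$, $\theta_b>1$, and $\lambda_a\theta_b\ge\lambda_a+\theta_b$.
   Context: Setting: $E=\{e_0,\dots,e_n\}\subset\mathbb R^n$ is the vertex set of an $n$-simplex with $e_0+\cdots+e_n=0$, and $X\subset\mathbb R^n\setminus\{0\}$ is a finite set with $E\subseteq X$, no element of $X$ a positive multiple of another, such that every $n+1$ points of $X$ are in good position. (A finite set $A$ is in conical position if $0\notin\operatorname{conv}A$ and no point of $A$ lies in the positive hull—set of nonnegative linear combinations—of the other points; it is in good position otherwise.) For $p\in X$, the support $S_p$ is the minimal subset of $E$ whose positive hull contains $p$; then $p=\sum_{e_i\in S_p}\lambda_ie_i$ uniquely with all $\lambda_i>0$. Convention: each $p\in X$ is replaced by the positive multiple for which $\min_{e_i\in S_p}\lambda_i=1$. *)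

From HB Require Import structures.
From mathcomp Require Import all_boot all_order all_algebra.
Set Implicit Arguments.
Unset Strict Implicit.
Unset Printing Implicit Defensive.
Import Order.TTheory GRing.Theory Num.Theory.
Local Open Scope ring_scope.

Section Defs.
Variables (R : realFieldType) (n : nat).

Definition affinely_independent (E : 'I_n.+1 -> 'rV[R]_n) : Prop :=
  forall c : 'I_n.+1 -> R, \sum_i c i = 0 -> \sum_i c i *: E i = 0 -> forall i, c i = 0.

(* For a finite family of distinct points f : 'I_m -> R^n (i.e. the set {f i}). *)
Definition zero_in_conv (m : nat) (f : 'I_m -> 'rV[R]_n) : Prop :=
  exists c : 'I_m -> R, (forall i, 0 <= c i) /\ \sum_i c i = 1 /\ \sum_i c i *: f i = 0.

Definition in_pos_hull_others (m : nat) (f : 'I_m -> 'rV[R]_n) (j : 'I_m) : Prop :=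
  exists c : 'I_m -> R, (forall i, 0 <= c i) /\ f j = \sum_(i | i != j) c i *: f i.

Definition conical_position (m : nat) (f : 'I_m -> 'rV[R]_n) : Prop :=
  ~ zero_in_conv f /\ forall j, ~ in_pos_hull_others f j.

Definition good_position (m : nat) (f : 'I_m -> 'rV[R]_n) : Prop :=
  ~ conical_position f.

Definition in_pos_hull_sub (E : 'I_n.+1 -> 'rV[R]_n) (S : {set 'I_n.+1}) (p : 'rV[R]_n) : Prop :=
  exists c : 'I_n.+1 -> R, (forall i, 0 <= c i) /\ p = \sum_(i in S) c i *: E i.

Definition is_support (E : 'I_n.+1 -> 'rV[R]_n) (S : {set 'I_n.+1}) (p : 'rV[R]_n) : Prop :=
  in_pos_hull_sub E S p /\ forall S' : {set 'I_n.+1}, S' \proper S -> ~ in_pos_hull_sub E S' p.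

Definition setting (E : 'I_n.+1 -> 'rV[R]_n) (X : seq 'rV[R]_n) : Prop :=
  [/\ affinely_independent E,
      \sum_i E i = 0,
      (forall i, E i \in X),
      0 \notin X
    & (forall x y, x \in X -> y \in X -> forall t : R, 0 < t -> y = t *: x -> y = x)] /\
  (forall f : 'I_n.+1 -> 'rV[R]_n, injective f -> (forall i, f i \in X) ->
         good_position f).

Definition normalized_coeffs (E : 'I_n.+1 -> 'rV[R]_n) (S : {set 'I_n.+1})
    (p : 'rV[R]_n) (lam : 'I_n.+1 -> R) : Prop :=
  [/\ p = \sum_(i in S) lam i *: E i,
      (forall i, i \in S -> 1 <= lam i)
    & exists2 i, i \in S & lam i = 1].

End Defs.

From HB Require Import structures.
From mathcomp Require Import all_boot all_order all_algebra.
From mathcomp Require Import ring lra zify.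
Import Order.TTheory GRing.Theory Num.Theory.
Local Open Scope ring_scope.

(* Replace the vertices e_a, e_b of the simplex by p and q: this "exchange" family
   f consists of n+1 points of X.  Since the e_i are affinely independent and sum to
   0, the only linear relations among them have constant coefficients; expanding p
   and q in the e_i, every linear relation g among the f_i therefore satisfies
       g_b theta_b = g_a lam_a   and   g_a lam_k + g_b theta_k + g_k = g_a lam_a
   for every common index k of S_p and S_q.  If the "cross inequality"
   lam_a theta_b < lam_k theta_b + theta_k lam_a held for every common k, these
   equations would force every relation with g_a >= 0 and some g_k >= 0 to vanish;
   this rigidity rules out 0 in the convex hull and points in the positive hull of
   the others, so f would be in conical position, contradicting the setting.  Hence
   some common k violates the cross inequality, and since lam_k, theta_k, lam_a,
   theta_b >= 1 the claimed inequalities follow by elementary arithmetic. *)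

Lemma cross_relation_trivial {R : realFieldType} {ga gb gi la tb li ti : R} :
  0 <= ga -> 0 <= gi -> 1 <= tb -> la * tb < li * tb + ti * la ->
  ga * li + gb * ti + gi = ga * la -> gb * tb = ga * la ->
  [/\ ga = 0, gb = 0 & gi = 0].
Proof.
move=> ga_ge0 gi_ge0 tb_ge1 cross rel_i rel_ab.
have key : ga * (li * tb + ti * la - la * tb) + gi * tb = 0.
  transitivity (tb * (ga * li + gb * ti + gi - ga * la) - ti * (gb * tb - ga * la)).
    by ring.
  by rewrite rel_i rel_ab !subrr !mulr0 subrr.
have ga0 : ga = 0 by nra.
have gb0 : gb = 0 by move: rel_ab; rewrite ga0 mul0r; nra.
by split=> //; move: rel_i; rewrite ga0 gb0; lra.
Qed.

Lemma cross_violation_bound {R : realFieldType} {la tb li ti : R} :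
  1 <= la -> 1 <= tb -> 1 <= li -> 1 <= ti -> li * tb + ti * la <= la * tb ->
  [/\ 1 < la, 1 < tb & la + tb <= la * tb].
Proof.
move=> la1 tb1 li1 ti1 viol.
have bound : la + tb <= la * tb by nra.
by split=> //; nra.
Qed.

Definition exchange {T : Type} {m : nat} (E : 'I_m -> T) (a b : 'I_m) (p q : T)
    (i : 'I_m) : T :=
  if i == a then p else if i == b then q else E i.

Lemma card_gt1_other (T : finType) (A : {set T}) (j : T) :
  (1 < #|A|)%N -> exists2 i, i \in A & i != j.
Proof.
rewrite (cardsD1 j A) => hA.
have : (0 < #|A :\ j|)%N by case: (j \in A) hA => /= hA; lia.
by case/card_gt0P => i; rewrite !inE => /andP[ij iA]; exists i.
Qed.

Lemma simplex_relation_const {R : realFieldType} {n : nat} (E : 'I_n.+1 -> 'rV[R]_n) :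
  affinely_independent E -> \sum_i E i = 0 ->
  forall d : 'I_n.+1 -> R, \sum_k d k *: E k = 0 -> forall x y, d x = d y.
Proof.
move=> E_indep E_sum d hd x y.
pose mean := (\sum_k d k) / n.+1%:R.
have n1_neq0 : n.+1%:R != 0 :> R by rewrite pnatr_eq0.
have centred : \sum_k (d k - mean) = 0.
  by rewrite sumrB sumr_const card_ord -mulr_natr divfK // subrr.
have rel : \sum_k (d k - mean) *: E k = 0.
  under eq_bigr do rewrite scalerBl.
  by rewrite sumrB hd -scaler_sumr E_sum scaler0 subrr.
have const := @E_indep (fun k => d k - mean) centred rel.
by move: (const x) (const y) => /subr0_eq -> /subr0_eq ->.
Qed.

Lemma pos_hull_relation {R : realFieldType} {n m : nat} (f : 'I_m -> 'rV[R]_n) (j : 'I_m) :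
  in_pos_hull_others f j ->
  exists g : 'I_m -> R,
    [/\ \sum_i g i *: f i = 0, g j = -1 & forall i, i != j -> 0 <= g i].
Proof.
move=> [c [c_ge0 fj]].
exists (fun i => if i == j then -1 else c i); split => [||i /negbTE -> //].
- rewrite (bigD1 j) //= eqxx scaleN1r fj.
  by rewrite [X in _ + X](eq_bigr (fun i => c i *: f i)) ?addNr // => i /negbTE ->.
- by rewrite eqxx.
Qed.

(* Two equal members of a family lie in each other's positive hull, so a family
   none of whose points is in the positive hull of the others is injective. *)
Lemma injective_of_not_in_pos_hull {R : realFieldType} {n m : nat}
    (f : 'I_m -> 'rV[R]_n) :
  (forall j, ~ in_pos_hull_others f j) -> injective f.
Proof.
move=> no_hull x y fxy; case: (eqVneq x y) => // xy; case: (no_hull x).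
exists (fun i => if i == y then 1 else 0); split => [i|]; first by case: ifP.
rewrite (bigD1 y) 1?eq_sym //= eqxx scale1r big1 ?addr0 //.
by move=> i /andP[_ /negbTE ->]; rewrite scale0r.
Qed.

Section Exchange.
Context {R : realFieldType} {n : nat} {E : 'I_n.+1 -> 'rV[R]_n}.
Context {p q : 'rV[R]_n} {Sp Sq : {set 'I_n.+1}} {lam theta : 'I_n.+1 -> R}.
Context {a b : 'I_n.+1}.
Hypotheses (E_indep : affinely_independent E) (E_sum : \sum_i E i = 0).
Hypotheses (p_def : p = \sum_(i in Sp) lam i *: E i)
           (q_def : q = \sum_(i in Sq) theta i *: E i).
Hypotheses (SpUSq : Sp :|: Sq = [set: 'I_n.+1])
           (SpDSq : Sp :\: Sq = [set a]) (SqDSp : Sq :\: Sp = [set b]).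

Local Notation f := (exchange E a b p q).

Lemma a_only : (a \in Sp) && (a \notin Sq).
Proof. by have := set11 a; rewrite -SpDSq inE andbC. Qed.

Lemma b_only : (b \in Sq) && (b \notin Sp).
Proof. by have := set11 b; rewrite -SqDSp inE andbC. Qed.

Lemma a_neq_b : a != b.
Proof. by case/andP: a_only => _; apply: contraNneq => ->; case/andP: b_only. Qed.

Lemma common_index {k : 'I_n.+1} : k != a -> k != b -> k \in Sp :&: Sq.
Proof.
move=> ka kb; rewrite inE; case kp: (k \in Sp); case kq: (k \in Sq) => //=.
- have : k \in Sp :\: Sq by rewrite inE kp kq.
  by rewrite SpDSq inE (negbTE ka).
- have : k \in Sq :\: Sp by rewrite inE kp kq.
  by rewrite SqDSp inE (negbTE kb).
- have : k \in Sp :|: Sq by rewrite SpUSq inE.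
  by rewrite inE kp kq.
Qed.

Lemma common_neq {k : 'I_n.+1} : k \in Sp :&: Sq -> (k != a) && (k != b).
Proof.
rewrite inE => /andP[kp kq]; apply/andP; split.
- by apply: contraTneq kq => ->; case/andP: a_only.
- by apply: contraTneq kp => ->; case/andP: b_only.
Qed.

(* The coefficient of e_k in the linear combination of the f_i with coefficients g,
   once p and q are expanded in the e_i (exchange_comb). *)
Definition exchange_coef (g : 'I_n.+1 -> R) (k : 'I_n.+1) : R :=
  g a * (if k \in Sp then lam k else 0) + g b * (if k \in Sq then theta k else 0)
  + (if (k == a) || (k == b) then 0 else g k).

Lemma exchange_comb (g : 'I_n.+1 -> R) :
  \sum_i g i *: f i = \sum_k exchange_coef g k *: E k.
Proof.
have ba : b != a by rewrite eq_sym a_neq_b.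
rewrite (bigD1 a) //= /exchange eqxx (bigD1 b) //= eqxx (negbTE ba).
under eq_bigr => i /andP[ia ib] do rewrite (negbTE ia) (negbTE ib).
under [RHS]eq_bigr do rewrite !scalerDl -!scalerA.
rewrite !big_split /= -!scaler_sumr p_def q_def addrA.
congr (_ *: _ + _ *: _ + _).
- by rewrite big_mkcond; apply: eq_bigr => i _; case: ifP; rewrite ?scale0r.
- by rewrite big_mkcond; apply: eq_bigr => i _; case: ifP; rewrite ?scale0r.
rewrite [RHS](bigD1 a) //= eqxx scale0r add0r (bigD1 b ba) /= eqxx orbT scale0r add0r.
by apply: eq_bigr => i /andP[ia ib]; rewrite (negbTE ia) (negbTE ib).
Qed.

Lemma exchange_relation {g : 'I_n.+1 -> R} :
  \sum_i g i *: f i = 0 ->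
  g b * theta b = g a * lam a /\
  forall k, k \in Sp :&: Sq -> g a * lam k + g b * theta k + g k = g a * lam a.
Proof.
rewrite exchange_comb => /(simplex_relation_const _ E_indep E_sum) const.
have coef_a : exchange_coef g a = g a * lam a.
  by rewrite /exchange_coef; case/andP: a_only => -> /negbTE ->; rewrite eqxx /=; ring.
split.
  have := const b a; rewrite coef_a => <-.
  by rewrite /exchange_coef; case/andP: b_only => -> /negbTE ->; rewrite eqxx orbT /=; ring.
move=> k kC; have /andP[ka kb] := common_neq kC.
move: kC; rewrite inE => /andP[kp kq].
by rewrite -coef_a -(const k a) /exchange_coef kp kq (negbTE ka) (negbTE kb).
Qed.

Section Rigidity.
Hypotheses (lam_a_ge1 : 1 <= lam a) (theta_b_ge1 : 1 <= theta b).
(* The cross inequality at every common index, assumed in order to reach a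
   contradiction with good position. *)
Hypothesis cross : forall i, i \in Sp :&: Sq ->
  lam a * theta b < lam i * theta b + theta i * lam a.
Hypothesis common_other : forall j, exists2 i, i \in Sp :&: Sq & i != j.

Lemma exchange_rigid {g : 'I_n.+1 -> R} {i : 'I_n.+1} :
  \sum_j g j *: f j = 0 -> 0 <= g a -> i \in Sp :&: Sq -> 0 <= g i ->
  forall k, g k = 0.
Proof.
move=> rel ga_ge0 iC gi_ge0; have [rel_ab rel_common] := exchange_relation rel.
have [ga0 gb0 _] := cross_relation_trivial ga_ge0 gi_ge0 theta_b_ge1 (cross i iC)
  (rel_common i iC) rel_ab.
move=> k; have [-> // | ka] := eqVneq k a; have [-> // | kb] := eqVneq k b.
by have := rel_common k (common_index ka kb); rewrite ga0 gb0 !mul0r !add0r.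
Qed.

Lemma exchange_conical : conical_position f.
Proof.
split.
  move=> [c [c_ge0 [c_sum rel]]]; have [i iC _] := common_other a.
  have c0 := exchange_rigid rel (c_ge0 a) iC (c_ge0 i).
  by move: c_sum; rewrite big1 // => /eqP; rewrite eq_sym oner_eq0.
move=> j /pos_hull_relation [g [rel gj g_ge0]].
have [ja | ja] := eqVneq j a.
  subst j; have [rel_ab _] := exchange_relation rel.
  have gb_ge0 : 0 <= g b by apply: g_ge0; rewrite eq_sym a_neq_b.
  have : 0 <= g b * theta b by rewrite mulr_ge0 // (le_trans ler01 theta_b_ge1).
  by rewrite rel_ab gj mulN1r oppr_ge0 leNgt (lt_le_trans ltr01 lam_a_ge1).
have [i iC ij] := common_other j.
have ga_ge0 : 0 <= g a by apply: g_ge0; rewrite eq_sym.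
have := exchange_rigid rel ga_ge0 iC (g_ge0 i ij) j.
by rewrite gj => /eqP; rewrite oppr_eq0 oner_eq0.
Qed.

End Rigidity.
End Exchange.

Theorem proposition6p7 (R : realFieldType) (n : nat)
    (E : 'I_n.+1 -> 'rV[R]_n) (X : seq 'rV[R]_n)
    (p q : 'rV[R]_n) (Sp Sq : {set 'I_n.+1}) (lam theta : 'I_n.+1 -> R)
    (a b : 'I_n.+1) :
  (3 <= n)%N ->
  setting E X ->
  p \in X -> q \in X ->
  is_support E Sp p -> is_support E Sq q ->
  normalized_coeffs E Sp p lam -> normalized_coeffs E Sq q theta ->
  Sp :|: Sq = [set: 'I_n.+1] ->
  #|Sp :&: Sq| = n.-1 ->
  Sp :\: Sq = [set a] -> Sq :\: Sp = [set b] ->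
  [/\ 1 < lam a, 1 < theta b & lam a + theta b <= lam a * theta b].
Proof.
move=> n_ge3 [[E_indep E_sum E_X _ _] good] pX qX _ _ [p_def lam_ge1 _]
  [q_def theta_ge1 _] SpUSq card_common SpDSq SqDSp.
have /setDP [aSp _] : a \in Sp :\: Sq by rewrite SpDSq set11.
have /setDP [bSq _] : b \in Sq :\: Sp by rewrite SqDSp set11.
have [lam_a_ge1 theta_b_ge1] := (lam_ge1 a aSp, theta_ge1 b bSq).
have [/existsP [i /andP [iC viol]] | no_viol] := boolP [exists i,
  (i \in Sp :&: Sq) && (lam i * theta b + theta i * lam a <= lam a * theta b)].
  have [iSp iSq] : i \in Sp /\ i \in Sq by apply/andP; rewrite -in_setI.
  exact: cross_violation_bound (lam_ge1 i iSp) (theta_ge1 i iSq) viol.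
have cross i : i \in Sp :&: Sq -> lam a * theta b < lam i * theta b + theta i * lam a.
  by move=> iC; move: no_viol; rewrite negb_exists => /forallP/(_ i); rewrite iC /= -ltNge.
have common_other j : exists2 i, i \in Sp :&: Sq & i != j.
  by apply: card_gt1_other; rewrite card_common; lia.
have conical := exchange_conical E_indep E_sum p_def q_def SpUSq SpDSq SqDSp
  lam_a_ge1 theta_b_ge1 cross common_other.
have in_X i : exchange E a b p q i \in X.
  by rewrite /exchange; case: ifP => _ //; case: ifP.
have inj := injective_of_not_in_pos_hull (exchange E a b p q) conical.2.
by case: (good _ inj in_X conical).
Qed.
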